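(* Every solution of system (CSF) has bounded velocities: there is a constant $C<\infty$, depending only on the initial data and the parameters, such that $\max_i|\mathbf v_i(t)|\le C$ for all $t\ge0$.
   Context: Fix integers $N\ge1$, $n\ge1$, masses $m_1,\dots,m_N>0$ with $M=\sum_i m_i$, parameters $\sigma>0$, $p>0$, $\kappa\ge0$, and a communication kernel $\phi:[0,\infty)\to(0,\infty)$ that is smooth, positive and non-increasing. Write $\phi_{ij}=\phi(|\mathbf x_i-\mathbf x_j|)$, with $|\cdot|$ the Euclidean norm on $\mathbb R^n$. System (CSF) is, for $i=1,\dots,N$, $$\dot{\mathbf x}_i=\mathbf v_i,\qquad \dot{\mathbf v}_i=\sum_{j=1}^N m_j\phi_{ij}(\mathbf v_j-\mathbf v_i)+\sigma(\theta_i-|\mathbf v_i|^p)\mathbf v_i,\qquad \dot\theta_i=\kappa\sum_{j=1}^N m_j\phi_{ij}(\theta_j-\theta_i),$$ with $\mathbf x_i,\mathbf v_i\in\mathbb R^n$ and initial values $\theta_i(0)>0$; solutions are considered for $t\ge0$. *)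

From Stdlib Require Import Reals Lra.
From Coquelicot Require Import Coquelicot.
Open Scope R_scope.

Fixpoint sumN (N : nat) (f : nat -> R) : R :=
  match N with
  | O => 0
  | S k => sumN k f + f k
  end.

Definition vnorm (n : nat) (u : nat -> R) : R :=
  sqrt (sumN n (fun k => u k ^ 2)).

(* x^p for x >= 0 and p > 0, with the convention 0^p = 0
   (Stdlib's Rpower 0 p would be 1). *)
Definition rpow (x p : R) : R :=
  if Rle_dec x 0 then 0 else Rpower x p.

Definition right_cont_at0 (f : R -> R) : Prop :=
  forall eps, 0 < eps -> exists delta, 0 < delta /\
    forall t, 0 <= t < delta -> Rabs (f t - f 0) < eps.

(* Solution of system (CSF) on [0,oo): x i k t, v i k t = k-th coordinate
   of x_i(t), v_i(t); theta i t = theta_i(t).  The equations hold for t > 0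
   (classical derivatives) and all components are right-continuous at 0. *)
Definition CSF_solution (N n : nat) (m : nat -> R) (sigma p kappa : R)
  (phi : R -> R) (x v : nat -> nat -> R -> R) (theta : nat -> R -> R) : Prop :=
  (forall i k, (i < N)%nat -> (k < n)%nat ->
     right_cont_at0 (x i k) /\ right_cont_at0 (v i k)) /\
  (forall i, (i < N)%nat -> right_cont_at0 (theta i)) /\
  (forall i k t, (i < N)%nat -> (k < n)%nat -> 0 < t ->
     is_derive (x i k) t (v i k t)) /\
  (forall i k t, (i < N)%nat -> (k < n)%nat -> 0 < t ->
     is_derive (v i k) t
       (sumN N (fun j => m j * phi (vnorm n (fun l => x i l t - x j l t))
                          * (v j k t - v i k t))
        + sigma * (theta i t - rpow (vnorm n (fun l => v i l t)) p) * v i k t)) /\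
  (forall i t, (i < N)%nat -> 0 < t ->
     is_derive (theta i) t
       (kappa * sumN N (fun j => m j * phi (vnorm n (fun l => x i l t - x j l t))
                                  * (theta j t - theta i t)))).

From Stdlib Require Import Reals Lra Lia Classical.
From Coquelicot Require Import Coquelicot.
Open Scope R_scope.

(* The proof is a maximum principle applied twice.  The general form
   ([max_principle]) concerns a finite family of functions g_i on [0, oo),
   right-continuous at 0 and differentiable on (0, oo): if a member that is a
   largest one and lies above a threshold c always has g_i' <= 0, then a bound
   K >= c valid at time 0 holds forever.  It is proved by a first-hitting-time
   argument for the tilted family g_i(t) - eps t.

   Applied to the temperatures theta_i (c = K = th = max(1, theta_j(0))), it
   shows theta_i <= th, since the consensus term is nonpositive at a maximum.
   Applied to the kinetic energies |v_i|^2 with threshold th^(2/p), it bounds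
   them: at a fastest agent <v_i, v_j - v_i> <= 0 makes the alignment term
   dissipative, and |v_i|^2 >= th^(2/p) gives |v_i|^p >= th >= theta_i, so the
   friction term sigma (theta_i - |v_i|^p) |v_i|^2 is dissipative too. *)

Lemma sumN_ext N f g : (forall k, (k < N)%nat -> f k = g k) -> sumN N f = sumN N g.
Proof.
  induction N as [|N IH]; intros H; simpl; [reflexivity|].
  rewrite IH by (intros; apply H; lia). rewrite H by lia. reflexivity.
Qed.

Lemma sumN_plus N f g : sumN N (fun k => f k + g k) = sumN N f + sumN N g.
Proof. induction N as [|N IH]; simpl; [lra|]. rewrite IH. lra. Qed.

Lemma sumN_scal N c f : sumN N (fun k => c * f k) = c * sumN N f.
Proof. induction N as [|N IH]; simpl; [lra|]. rewrite IH. lra. Qed.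

Lemma sumN_swap N M (f : nat -> nat -> R) :
  sumN N (fun k => sumN M (fun j => f k j)) = sumN M (fun j => sumN N (fun k => f k j)).
Proof.
  induction N as [|N IH]; simpl.
  - induction M as [|M IHM]; simpl; [lra|]. rewrite <- IHM. lra.
  - rewrite IH, <- sumN_plus. reflexivity.
Qed.

Lemma sumN_le N f g : (forall k, (k < N)%nat -> f k <= g k) -> sumN N f <= sumN N g.
Proof.
  induction N as [|N IH]; intros H; simpl; [lra|].
  assert (f N <= g N) by (apply H; lia).
  assert (sumN N f <= sumN N g) by (apply IH; intros; apply H; lia). lra.
Qed.

Lemma sumN_nonpos N f : (forall k, (k < N)%nat -> f k <= 0) -> sumN N f <= 0.
Proof.
  intros H. replace 0 with (sumN N (fun _ => 0)) by (clear H; induction N; simpl; lra).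
  apply sumN_le. exact H.
Qed.

Lemma finite_upper_bound N (f : nat -> R) : exists B, forall i, (i < N)%nat -> f i <= B.
Proof.
  induction N as [|N [B HB]].
  - exists 0. intros; lia.
  - exists (Rmax B (f N)). intros i Hi. destruct (Nat.eq_dec i N) as [->|Hne].
    + apply Rmax_r.
    + eapply Rle_trans; [apply HB; lia | apply Rmax_l].
Qed.

Lemma right_cont_at0_filterlim f :
  right_cont_at0 f <-> filterlim f (within (fun t => 0 <= t) (locally 0)) (locally (f 0)).
Proof.
  split.
  - intros H. apply filterlim_locally. intros eps.
    destruct (H eps (cond_pos eps)) as [d [Hd Hnear]].
    exists (mkposreal d Hd). intros y Hy Hy0.
    change (Rabs (y - 0) < d) in Hy. change (Rabs (f y - f 0) < eps).
    apply Hnear. rewrite Rminus_0_r, Rabs_right in Hy; lra.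
  - intros H eps He.
    destruct (proj1 (filterlim_locally _ _) H (mkposreal eps He)) as [d Hnear].
    exists d. split; [apply cond_pos|]. intros t Ht.
    apply (Hnear t); [|lra]. change (Rabs (t - 0) < d).
    rewrite Rminus_0_r, Rabs_right; lra.
Qed.

Lemma right_cont_at0_plus f g :
  right_cont_at0 f -> right_cont_at0 g -> right_cont_at0 (fun t => f t + g t).
Proof.
  rewrite !right_cont_at0_filterlim. intros Hf Hg.
  exact (filterlim_comp_2 f g Rplus Hf Hg (filterlim_plus (f 0) (g 0))).
Qed.

Lemma right_cont_at0_mult f g :
  right_cont_at0 f -> right_cont_at0 g -> right_cont_at0 (fun t => f t * g t).
Proof.
  rewrite !right_cont_at0_filterlim. intros Hf Hg.
  exact (filterlim_comp_2 f g Rmult Hf Hg (@filterlim_mult R_AbsRing (f 0) (g 0))).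
Qed.

Lemma right_cont_at0_of_continuous f : continuous f 0 -> right_cont_at0 f.
Proof.
  intros H. apply right_cont_at0_filterlim.
  exact (filterlim_filter_le_1 f (filter_le_within _) H).
Qed.

Lemma right_cont_at0_sumN N (F : nat -> R -> R) :
  (forall k, (k < N)%nat -> right_cont_at0 (F k)) ->
  right_cont_at0 (fun t => sumN N (fun k => F k t)).
Proof.
  induction N as [|N IH]; intros HF; simpl.
  - apply right_cont_at0_of_continuous, continuous_const.
  - apply right_cont_at0_plus; [apply IH; intros; apply HF | apply HF]; lia.
Qed.

Lemma continuous_eps f x : continuous f x ->
  forall eps, 0 < eps -> exists d, 0 < d /\ forall y, Rabs (y - x) < d -> Rabs (f y - f x) < eps.
Proof.
  intros H eps He.
  destruct (proj1 (filterlim_locally _ _) H (mkposreal eps He)) as [d Hnear].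
  exists d. split; [apply cond_pos|]. intros y Hy. exact (Hnear y Hy).
Qed.

Lemma is_derive_sumN N (F : nat -> R -> R) (F' : nat -> R) t :
  (forall k, (k < N)%nat -> is_derive (F k) t (F' k)) ->
  is_derive (fun s => sumN N (fun k => F k s)) t (sumN N F').
Proof.
  induction N as [|N IH]; intros HF; simpl.
  - apply (@is_derive_const R_AbsRing R_NormedModule).
  - apply (is_derive_plus (fun s => sumN N (fun k => F k s)) (F N));
      [apply IH; intros; apply HF | apply HF]; lia.
Qed.

Lemma derive_ge_left_slope f T l e d : is_derive f T l -> 0 < d ->
  (forall t, T - d < t < T -> f t - f T < e * (t - T)) -> e <= l.
Proof.
  intros Hder Hd Hchord. apply is_derive_Reals in Hder.
  apply Rnot_lt_le. intros Hlt.
  destruct (Hder (e - l)) as [[d' Hd'] Hquot]; [lra|].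
  set (s := - Rmin d d' / 2).
  assert (Hmin : 0 < Rmin d d') by (apply Rmin_pos; assumption).
  pose proof (Rmin_l d d'). pose proof (Rmin_r d d').
  assert (Hs_abs : Rabs s < d') by (unfold s; rewrite Rabs_left; simpl in *; lra).
  specialize (Hquot s ltac:(unfold s; lra) Hs_abs). simpl in Hquot.
  specialize (Hchord (T + s) ltac:(unfold s; lra)).
  replace (T + s - T) with s in Hchord by ring.
  assert (Hslope : e < (f (T + s) - f T) / s).
  { apply Rmult_lt_reg_r with (- s); [unfold s; lra|].
    replace ((f (T + s) - f T) / s * - s) with (- (f (T + s) - f T)) by (field; unfold s; lra).
    lra. }
  apply Rabs_def2 in Hquot. lra.
Qed.

Lemma le_of_left_lt f T L d : continuous f T -> 0 < d ->
  (forall u, T - d < u < T -> f u < L) -> f T <= L.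
Proof.
  intros Hc Hd Hbelow. apply Rnot_lt_le. intros Hgt.
  destruct (continuous_eps f T Hc (f T - L)) as [e [He Hnear]]; [lra|].
  assert (Hmin : 0 < Rmin d e) by (apply Rmin_pos; assumption).
  pose proof (Rmin_l d e). pose proof (Rmin_r d e).
  set (u := T - Rmin d e / 2).
  specialize (Hnear u ltac:(unfold u; rewrite Rabs_left; lra)).
  specialize (Hbelow u ltac:(unfold u; lra)).
  apply Rabs_def2 in Hnear. lra.
Qed.

Lemma uniform_delta N (P : nat -> R -> Prop) :
  (forall i, (i < N)%nat -> exists d, 0 < d /\ forall y, Rabs y < d -> P i y) ->
  exists d, 0 < d /\ forall i y, (i < N)%nat -> Rabs y < d -> P i y.
Proof.
  induction N as [|N IH]; intros Hloc.
  - exists 1. split; [lra|]. intros; lia.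
  - destruct IH as [d [Hd Hnear]]; [intros; apply Hloc; lia|].
    destruct (Hloc N) as [e [He Hnear_N]]; [lia|].
    exists (Rmin d e). split; [apply Rmin_pos; assumption|].
    intros i y Hi Hy. pose proof (Rmin_l d e). pose proof (Rmin_r d e).
    destruct (Nat.eq_dec i N) as [->|Hne].
    + apply Hnear_N. lra.
    + apply Hnear; [lia|lra].
Qed.

Section FirstHittingTime.
Variables (N : nat) (h : nat -> R -> R) (L : R).
Hypothesis h_rc0 : forall i, (i < N)%nat -> right_cont_at0 (h i).
Hypothesis h_cont : forall i t, (i < N)%nat -> 0 < t -> continuous (h i) t.
Hypothesis h_start : forall i, (i < N)%nat -> h i 0 < L.

Lemma below_after_start :
  exists d, 0 < d /\ forall j u, (j < N)%nat -> 0 <= u < d -> h j u < L.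
Proof.
  destruct (uniform_delta N (fun j y => 0 <= y -> h j y < L)) as [d [Hd Hnear]].
  - intros j Hj. specialize (h_start j Hj).
    destruct (h_rc0 j Hj (L - h j 0)) as [d [Hd Hnear]]; [lra|].
    exists d. split; [exact Hd|]. intros y Hy Hy0.
    rewrite Rabs_right in Hy by lra.
    assert (Habs := Hnear y ltac:(lra)). apply Rabs_def2 in Habs. lra.
  - exists d. split; [exact Hd|]. intros j u Hj Hu.
    apply Hnear; [exact Hj | rewrite Rabs_right; lra | lra].
Qed.

Lemma below_near T : 0 < T -> (forall j, (j < N)%nat -> h j T < L) ->
  exists d, 0 < d /\ forall j y, (j < N)%nat -> Rabs y < d -> h j (T + y) < L.
Proof.
  intros HT Hbelow. apply (uniform_delta N (fun j y => h j (T + y) < L)).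
  intros j Hj. specialize (Hbelow j Hj).
  destruct (continuous_eps _ _ (h_cont j T Hj HT) (L - h j T)) as [d [Hd Hnear]]; [lra|].
  exists d. split; [exact Hd|]. intros y Hy.
  assert (Habs := Hnear (T + y) ltac:(replace (T + y - T) with y by ring; exact Hy)).
  apply Rabs_def2 in Habs. lra.
Qed.

Lemma first_hitting_time : (exists i t, (i < N)%nat /\ 0 <= t /\ L <= h i t) ->
  exists T, 0 < T /\ (forall j u, (j < N)%nat -> 0 <= u < T -> h j u < L) /\
    (forall j, (j < N)%nat -> h j T <= L) /\ (exists i, (i < N)%nat /\ L <= h i T).
Proof.
  intros [i0 [t0 [Hi0 [Ht0 Hreach]]]].
  set (E := fun s => 0 <= s /\ forall j u, (j < N)%nat -> 0 <= u <= s -> h j u < L).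
  assert (HE_bound : bound E).
  { exists t0. intros s [Hs Hbelow]. apply Rnot_lt_le. intros Hlt.
    specialize (Hbelow i0 t0 Hi0 ltac:(lra)). lra. }
  assert (HE0 : E 0).
  { split; [lra|]. intros j u Hj Hu. replace u with 0 by lra. auto. }
  destruct (completeness E HE_bound (ex_intro _ 0 HE0)) as [T [HT_ub HT_lub]].
  assert (Hbefore : forall j u, (j < N)%nat -> 0 <= u < T -> h j u < L).
  { intros j u Hj Hu. destruct (classic (exists s, E s /\ u < s)) as [[s [[_ Hs] Hus]]|Hno].
    - apply Hs; [exact Hj | lra].
    - assert (Hle : T <= u); [|lra]. apply HT_lub. intros s Hs.
      apply Rnot_lt_le. intros Hlt. apply Hno. exists s. split; assumption. }
  assert (HT_pos : 0 < T).
  { destruct below_after_start as [d [Hd Hbelow]].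
    assert (HEd : E (d / 2)).
    { split; [lra|]. intros j u Hj Hu. apply Hbelow; [exact Hj | lra]. }
    specialize (HT_ub _ HEd). lra. }
  assert (Hat_T : forall j, (j < N)%nat -> h j T <= L).
  { intros j Hj. apply (le_of_left_lt (h j) T L T (h_cont j T Hj HT_pos) HT_pos).
    intros u Hu. apply Hbefore; [exact Hj | lra]. }
  exists T. split; [exact HT_pos|]. split; [exact Hbefore|]. split; [exact Hat_T|].
  apply NNPP. intros Hnone.
  destruct (below_near T HT_pos) as [d [Hd Hnear]].
  { intros j Hj. apply Rnot_le_lt. intros Hle. apply Hnone. exists j. split; assumption. }
  assert (HEd : E (T + d / 2)).
  { split; [lra|]. intros j u Hj Hu. destruct (Rlt_or_le u T).
    - apply Hbefore; [exact Hj | lra].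
    - replace u with (T + (u - T)) by ring. apply Hnear; [exact Hj | rewrite Rabs_right; lra]. }
  specialize (HT_ub _ HEd). lra.
Qed.

End FirstHittingTime.

Section MaxPrinciple.
Variables (N : nat) (g g' : nat -> R -> R) (c K : R).
Hypothesis g_rc0 : forall i, (i < N)%nat -> right_cont_at0 (g i).
Hypothesis g_deriv : forall i t, (i < N)%nat -> 0 < t -> is_derive (g i) t (g' i t).
Hypothesis g_top_nonincreasing : forall i t, (i < N)%nat -> 0 < t -> c <= g i t ->
  (forall j, (j < N)%nat -> g j t <= g i t) -> g' i t <= 0.
Hypothesis c_le_K : c <= K.
Hypothesis g_start : forall i, (i < N)%nat -> g i 0 <= K.

(* The strict bound for the tilted family g_i(t) - eps t against K + eps: at its
   first hitting time the hitting member would be a top member above c with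
   derivative at least eps, contradicting the hypothesis. *)
Lemma max_principle_tilted eps : 0 < eps ->
  forall i t, (i < N)%nat -> 0 <= t -> g i t - eps * t < K + eps.
Proof.
  intros Heps. set (h := fun i t => g i t - eps * t).
  assert (Hh_rc0 : forall i, (i < N)%nat -> right_cont_at0 (h i)).
  { intros i Hi. apply (right_cont_at0_plus (g i) (fun t => - (eps * t))); [auto|].
    apply right_cont_at0_of_continuous, (@ex_derive_continuous R_AbsRing R_NormedModule).
    auto_derive. trivial. }
  assert (Hh_cont : forall i t, (i < N)%nat -> 0 < t -> continuous (h i) t).
  { intros i t Hi Ht. apply (@ex_derive_continuous R_AbsRing R_NormedModule).
    apply (ex_derive_minus (g i)).
    - exists (g' i t). auto.
    - auto_derive. trivial. }
  assert (Hh_start : forall i, (i < N)%nat -> h i 0 < K + eps).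
  { intros i Hi. specialize (g_start i Hi). unfold h. lra. }
  intros i t Hi Ht. apply Rnot_le_lt. intros Hreach.
  destruct (first_hitting_time N h (K + eps) Hh_rc0 Hh_cont Hh_start)
    as [T [HT [Hbefore [Hat [k [Hk Hhit]]]]]].
  { exists i, t. auto. }
  assert (Htop : forall j, (j < N)%nat -> g j T <= g k T).
  { intros j Hj. specialize (Hat j Hj). unfold h in *. lra. }
  assert (Hc : c <= g k T).
  { assert (0 <= eps * T) by (apply Rmult_le_pos; lra). unfold h in Hhit. lra. }
  assert (Hslope : eps <= g' k T).
  { apply (derive_ge_left_slope (g k) T (g' k T) eps T); [auto | exact HT |].
    intros u Hu. specialize (Hbefore k u Hk ltac:(lra)). unfold h in *. lra. }
  specialize (g_top_nonincreasing k T Hk HT Hc Htop). lra.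
Qed.

(* Letting eps -> 0 in the tilted bound. *)
Theorem max_principle : forall i t, (i < N)%nat -> 0 <= t -> g i t <= K.
Proof.
  intros i t Hi Ht. apply Rnot_lt_le. intros Hlt.
  set (eps := (g i t - K) / (2 * (1 + t))).
  assert (Heps : 0 < eps) by (unfold eps; apply Rdiv_lt_0_compat; lra).
  assert (Hgap : eps * (1 + t) = (g i t - K) / 2) by (unfold eps; field; lra).
  specialize (max_principle_tilted eps Heps i t Hi Ht). lra.
Qed.

End MaxPrinciple.

Definition sqnorm (n : nat) (u : nat -> R) : R := sumN n (fun k => u k ^ 2).
Definition dot (n : nat) (u w : nat -> R) : R := sumN n (fun k => u k * w k).

Lemma right_cont_at0_sqnorm n (u : nat -> R -> R) :
  (forall k, (k < n)%nat -> right_cont_at0 (u k)) ->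
  right_cont_at0 (fun t => sqnorm n (fun k => u k t)).
Proof.
  intros Hu. apply (right_cont_at0_sumN n (fun k t => u k t ^ 2)). intros k Hk.
  simpl. apply right_cont_at0_mult; [apply Hu; exact Hk|].
  apply right_cont_at0_mult; [apply Hu; exact Hk|].
  apply right_cont_at0_of_continuous, continuous_const.
Qed.

Lemma is_derive_sqnorm n (u : nat -> R -> R) (u' : nat -> R) t :
  (forall k, (k < n)%nat -> is_derive (u k) t (u' k)) ->
  is_derive (fun s => sqnorm n (fun k => u k s)) t (2 * dot n (fun k => u k t) u').
Proof.
  intros Hu. unfold dot. rewrite <- sumN_scal.
  apply (is_derive_sumN n (fun k s => u k s ^ 2)). intros k Hk.
  replace (2 * (u k t * u' k)) with (INR 2 * u' k * u k t ^ Nat.pred 2) by (simpl; ring).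
  apply is_derive_pow. apply Hu. exact Hk.
Qed.

Lemma sqnorm_nonneg n u : 0 <= sqnorm n u.
Proof.
  unfold sqnorm. induction n as [|n IH]; cbn [sumN]; [lra|].
  pose proof (pow2_ge_0 (u n)). lra.
Qed.

(* <u, w - u> <= (|w|^2 - |u|^2) / 2, since |w - u|^2 >= 0. *)
Lemma dot_diff_le n u w : dot n u (fun k => w k - u k) <= (sqnorm n w - sqnorm n u) / 2.
Proof.
  unfold dot, sqnorm. induction n as [|n IH]; simpl; [lra|].
  pose proof (pow2_ge_0 (w n - u n)). simpl in *. nra.
Qed.

Lemma dot_alignment_friction n N (a : nat -> R) (b : R) (u : nat -> R) (w : nat -> nat -> R) :
  dot n u (fun k => sumN N (fun j => a j * (w j k - u k)) + b * u k)
  = sumN N (fun j => a j * dot n u (fun k => w j k - u k)) + b * sqnorm n u.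
Proof.
  unfold dot, sqnorm.
  transitivity (sumN n (fun k => sumN N (fun j => a j * (u k * (w j k - u k))))
                + sumN n (fun k => b * u k ^ 2)).
  - rewrite <- sumN_plus. apply sumN_ext. intros k _.
    rewrite Rmult_plus_distr_l, <- sumN_scal.
    f_equal; [apply sumN_ext; intros; ring | ring].
  - rewrite sumN_swap, sumN_scal. f_equal. apply sumN_ext. intros j _. apply sumN_scal.
Qed.

Lemma dot_alignment_friction_nonpos n N (a : nat -> R) (b : R) (u : nat -> R)
  (w : nat -> nat -> R) :
  (forall j, (j < N)%nat -> 0 <= a j) ->
  (forall j, (j < N)%nat -> sqnorm n (w j) <= sqnorm n u) -> b <= 0 ->
  dot n u (fun k => sumN N (fun j => a j * (w j k - u k)) + b * u k) <= 0.
Proof.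
  intros Ha Htop Hb. rewrite dot_alignment_friction.
  assert (Halign : sumN N (fun j => a j * dot n u (fun k => w j k - u k)) <= 0).
  { apply sumN_nonpos. intros j Hj.
    pose proof (dot_diff_le n u (w j)). specialize (Htop j Hj). specialize (Ha j Hj). nra. }
  assert (0 <= sqnorm n u) by (apply sqnorm_nonneg).
  nra.
Qed.

Lemma rpow_vnorm_ge n u th p : 0 < th -> 0 < p ->
  Rpower th (2 / p) <= sqnorm n u -> th <= rpow (vnorm n u) p.
Proof.
  intros Hth Hp Hu.
  assert (Hpos : 0 < sqnorm n u) by (eapply Rlt_le_trans; [apply exp_pos | exact Hu]).
  unfold rpow, vnorm. fold (sqnorm n u).
  destruct (Rle_dec (sqrt (sqnorm n u)) 0) as [Hle|_].
  { pose proof (sqrt_lt_R0 _ Hpos). lra. }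
  rewrite <- Rpower_sqrt, Rpower_mult by exact Hpos.
  replace th with (Rpower (Rpower th (2 / p)) (/ 2 * p)) at 1.
  - apply Rle_Rpower_l; [lra|]. split; [apply exp_pos | exact Hu].
  - rewrite Rpower_mult. replace (2 / p * (/ 2 * p)) with 1 by (field; lra).
    apply Rpower_1. exact Hth.
Qed.

Section CSFBounds.
Variables (N n : nat) (m : nat -> R) (sigma p kappa : R) (phi : R -> R).
Variables (x v : nat -> nat -> R -> R) (theta : nat -> R -> R).
Hypothesis m_pos : forall i, (i < N)%nat -> 0 < m i.
Hypothesis sigma_pos : 0 < sigma.
Hypothesis p_pos : 0 < p.
Hypothesis kappa_nonneg : 0 <= kappa.
Hypothesis phi_pos : forall r, 0 <= r -> 0 < phi r.
Hypothesis sol : CSF_solution N n m sigma p kappa phi x v theta.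

Lemma weight_nonneg i j t : (j < N)%nat ->
  0 <= m j * phi (vnorm n (fun l => x i l t - x j l t)).
Proof.
  intros Hj. apply Rmult_le_pos; left; [apply m_pos; exact Hj|].
  apply phi_pos, sqrt_pos.
Qed.

(* The temperatures never exceed a bound of their initial values: at a largest
   temperature every term of the consensus sum is nonpositive. *)
Lemma theta_bounded th : (forall i, (i < N)%nat -> theta i 0 <= th) ->
  forall i t, (i < N)%nat -> 0 <= t -> theta i t <= th.
Proof.
  intros Hstart. destruct sol as [_ [Hrc [_ [_ Hdtheta]]]].
  apply (max_principle N theta
    (fun i t => kappa * sumN N (fun j => m j * phi (vnorm n (fun l => x i l t - x j l t))
                                        * (theta j t - theta i t))) th th);
    [exact Hrc | intros; apply Hdtheta; assumption | | lra | exact Hstart].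
  intros i t Hi Ht _ Htop.
  assert (Hsum : sumN N (fun j => m j * phi (vnorm n (fun l => x i l t - x j l t))
                                  * (theta j t - theta i t)) <= 0).
  { apply sumN_nonpos. intros j Hj.
    pose proof (weight_nonneg i j t Hj). specialize (Htop j Hj). nra. }
  nra.
Qed.

(* The kinetic energies |v_i|^2 never exceed a bound K >= th^(2/p) of their
   initial values: at a largest speed the alignment terms are dissipative,
   and above the threshold th^(2/p) the friction term sigma (theta_i - |v_i|^p)
   is dissipative as well because theta_i <= th. *)
Lemma velocity_energy_bounded th K : 0 < th ->
  (forall i t, (i < N)%nat -> 0 <= t -> theta i t <= th) ->
  Rpower th (2 / p) <= K ->
  (forall i, (i < N)%nat -> sqnorm n (fun k => v i k 0) <= K) ->
  forall i t, (i < N)%nat -> 0 <= t -> sqnorm n (fun k => v i k t) <= K.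
Proof.
  intros Hth Htheta HK Hstart. destruct sol as [Hrc [_ [_ [Hdv _]]]].
  set (accel := fun i k t =>
    sumN N (fun j => m j * phi (vnorm n (fun l => x i l t - x j l t)) * (v j k t - v i k t))
    + sigma * (theta i t - rpow (vnorm n (fun l => v i l t)) p) * v i k t).
  apply (max_principle N (fun i t => sqnorm n (fun k => v i k t))
    (fun i t => 2 * dot n (fun k => v i k t) (fun k => accel i k t)) (Rpower th (2 / p)) K);
    [| | | exact HK | exact Hstart].
  - intros i Hi. apply right_cont_at0_sqnorm. intros k Hk. apply (Hrc i k Hi Hk).
  - intros i t Hi Ht. apply is_derive_sqnorm. intros k Hk. apply Hdv; assumption.
  - intros i t Hi Ht Hbig Htop. cbv beta in Hbig, Htop.
    assert (Hfriction : theta i t <= rpow (vnorm n (fun l => v i l t)) p).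
    { eapply Rle_trans; [apply Htheta; [exact Hi | lra]|]. apply rpow_vnorm_ge; assumption. }
    assert (Hdot : dot n (fun k => v i k t) (fun k => accel i k t) <= 0).
    { apply (dot_alignment_friction_nonpos n N
        (fun j => m j * phi (vnorm n (fun l => x i l t - x j l t)))
        (sigma * (theta i t - rpow (vnorm n (fun l => v i l t)) p))
        (fun k => v i k t) (fun j k => v j k t)).
      - intros j Hj. apply weight_nonneg. exact Hj.
      - exact Htop.
      - nra. }
    lra.
Qed.

End CSFBounds.

(* Velocities stay bounded: take th = max(1, theta_i(0)), K = max(th^(2/p), |v_i(0)|^2)
   and C = sqrt K. *)
Theorem mainTheorem4
  (N n : nat) (HN : (1 <= N)%nat) (Hn : (1 <= n)%nat)
  (m : nat -> R) (Hm : forall i, (i < N)%nat -> 0 < m i)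
  (sigma p kappa : R) (Hsigma : 0 < sigma) (Hp : 0 < p) (Hkappa : 0 <= kappa)
  (phi : R -> R)
  (Hphi_smooth : forall (k : nat) (r : R), 0 <= r -> ex_derive_n phi k r)
  (Hphi_pos : forall r, 0 <= r -> 0 < phi r)
  (Hphi_noninc : forall r s, 0 <= r -> r <= s -> phi s <= phi r)
  (x v : nat -> nat -> R -> R) (theta : nat -> R -> R)
  (Htheta0 : forall i, (i < N)%nat -> 0 < theta i 0)
  (Hsol : CSF_solution N n m sigma p kappa phi x v theta) :
  exists C : R, forall i t, (i < N)%nat -> 0 <= t ->
    vnorm n (fun k => v i k t) <= C.
Proof.
  destruct (finite_upper_bound N (fun i => theta i 0)) as [B_theta HB_theta].
  destruct (finite_upper_bound N (fun i => sqnorm n (fun k => v i k 0))) as [B_v HB_v].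
  set (th := Rmax 1 B_theta).
  set (K := Rmax (Rpower th (2 / p)) B_v).
  assert (Hth : 0 < th) by (pose proof (Rmax_l 1 B_theta); unfold th; lra).
  assert (Htheta : forall i t, (i < N)%nat -> 0 <= t -> theta i t <= th).
  { apply (theta_bounded N n m sigma p kappa phi x v theta Hm Hkappa Hphi_pos Hsol).
    intros i Hi. eapply Rle_trans; [apply HB_theta; exact Hi | apply Rmax_r]. }
  exists (sqrt K). intros i t Hi Ht. apply sqrt_le_1_alt.
  apply (velocity_energy_bounded N n m sigma p kappa phi x v theta Hm Hsigma Hp Hphi_pos Hsol
           th K Hth Htheta); [apply Rmax_l | | exact Hi | exact Ht].
  intros j Hj. eapply Rle_trans; [apply HB_v; exact Hj | apply Rmax_r].
Qed.
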